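(* Assume $A=-2C$ and $0<H<1$, and let $D=D(\Gamma_1)=(1-H)(3H+1)$ and $m_{\Gamma_1}=\dfrac{2H}{H+\sqrt D+1}$. Define $$\Psi_2=-\frac{(H+1)(H-\sqrt D-3)}{2},\qquad \Psi_{-1}=\frac{(H^2-1)\big((H+1)\sqrt D-(H-1)^2+2\big)}{H^2},$$ $$\Psi_{-4}=\frac{(H+1)\sqrt D-(H-1)^2+2}{2},$$ and $$\tau_{\Gamma_1}=m_{\Gamma_1}^2\big(\Psi_2e^{2\pi C}+\Psi_{-1}e^{-\pi C}+\Psi_{-4}e^{-4\pi C}\big).$$ Let $M(y_0,t)$ be the matrix $$M(y_0,t)=S_{Y\to X}(p_0)\,e^{DY t}\,S_{X\to Y}(p_1)\,e^{DX t},$$ with $p_0=(x_0(y_0),y_0,0)$ and $p_1=(-y_0,-x_0(y_0),0)$. Then $$\lim_{y_0\to\infty,\ t\to\pi}\operatorname{tr}M(y_0,t)=\tau_{\Gamma_1}.$$ In particular, along symmetric cycles on this branch, whose half-return times tend to $\pi$, one has $\operatorname{tr}M\to\tau_{\Gamma_1}$ as $y_0\to\infty$.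
   Context: Setup. Fix real parameters $A\neq0$, $C$, $H$, $\Lambda$. Define $$X(x,y,z)=\big(Ax-H(((A-C)^2+1)z-\Lambda),\ \Lambda-(1+C^2)z,\ y+2Cz\big),$$ $$Y(x,y,z)=\big(-\Lambda-(1+C^2)z,\ Ay-H(((A-C)^2+1)z+\Lambda),\ x+2Cz\big).$$ $Z$ equals $X$ on $\{z\ge0\}$ and $Y$ on $\{z<0\}$. $\Gamma_1$ is the conic $G(x,y)=0$ in $\{z=0\}$, where $$G(x,y)=H(x^2+y^2)-(H+1)xy+\frac{2CH\Lambda(y-x)}{C^2+1}+\frac{\Lambda^2(H-1)}{C^2+1}.$$ With $k=C^2+1$, its branch is $$x_0(y)=\frac{(H+1)y}{2H}+\frac{C\Lambda}{k}+\sqrt{\frac{Dy^2}{4H^2}+\frac{C\Lambda(1-H)y}{Hk}+\frac{\Lambda^2(k-H)}{Hk^2}}.$$ The saltation matrices are $$S_{X\to Y}(p)=I+\frac{(Y-X)(p)e_3^T}{X_3(p)},\qquad S_{Y\to X}(p)=I-\frac{(Y-X)(p)e_3^T}{Y_3(p)},$$ with $e_3=(0,0,1)^T$. The saltation-corrected monodromy matrix of a symmetric cycle with half-return times $t_X=t_Y=T/2$ is $M(y_0,T/2)$. *)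

From HB Require Import structures.
From mathcomp Require Import all_boot all_order all_algebra.
From mathcomp Require Import all_classical all_reals all_analysis.
Set Implicit Arguments. Unset Strict Implicit. Unset Printing Implicit Defensive.
Import Order.TTheory GRing.Theory Num.Theory.
Import numFieldNormedType.Exports.
Local Open Scope ring_scope.
Local Open Scope classical_set_scope.

Section Defs.
Variable R : realType.

Definition mexp (n : nat) (M : 'M[R]_n.+1) : 'M[R]_n.+1 :=
  lim (series (fun k : nat => (k`!%:R)^-1 *: M ^+ k) @ \oo).

Definition vec3 (a b c : R) : 'cV[R]_3 :=
  \col_(i < 3) [:: a; b; c]`_i.

Definition e3 : 'cV[R]_3 := vec3 0 0 1.

Variables (A C H Lam : R).

Definition Xf (p : 'cV[R]_3) : 'cV[R]_3 :=
  let x := p 0 0 in let y := p 1 0 in let z := p 2%:R 0 in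
  vec3 (A * x - H * (((A - C) ^+ 2 + 1) * z - Lam))
       (Lam - (1 + C ^+ 2) * z)
       (y + 2 * C * z).

Definition Yf (p : 'cV[R]_3) : 'cV[R]_3 :=
  let x := p 0 0 in let y := p 1 0 in let z := p 2%:R 0 in
  vec3 (- Lam - (1 + C ^+ 2) * z)
       (A * y - H * (((A - C) ^+ 2 + 1) * z + Lam))
       (x + 2 * C * z).

(* Their (constant) Jacobian matrices DX, DY (rows = components). *)
Definition DX : 'M[R]_3 :=
  \matrix_(i < 3, j < 3)
    nth 0 (nth [::] [:: [:: A; 0; - H * ((A - C) ^+ 2 + 1)];
        [:: 0; 0; - (1 + C ^+ 2)];
        [:: 0; 1; 2 * C]] i) j.

Definition DY : 'M[R]_3 :=
  \matrix_(i < 3, j < 3)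
    nth 0 (nth [::] [:: [:: 0; 0; - (1 + C ^+ 2)];
        [:: 0; A; - H * ((A - C) ^+ 2 + 1)];
        [:: 1; 0; 2 * C]] i) j.

Definition S_XY (p : 'cV[R]_3) : 'M[R]_3 :=
  1%:M + ((Xf p) 2%:R 0)^-1 *: ((Yf p - Xf p) *m e3^T).

Definition S_YX (p : 'cV[R]_3) : 'M[R]_3 :=
  1%:M - ((Yf p) 2%:R 0)^-1 *: ((Yf p - Xf p) *m e3^T).

Definition kk : R := C ^+ 2 + 1.

Definition DG : R := (1 - H) * (3 * H + 1).

(* branch x0(y) of the conic Gamma_1 *)
Definition x0 (y : R) : R :=
  (H + 1) * y / (2 * H) + C * Lam / kk +
  Num.sqrt (DG * y ^+ 2 / (4 * H ^+ 2) + C * Lam * (1 - H) * y / (H * kk)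
            + Lam ^+ 2 * (kk - H) / (H * kk ^+ 2)).

Definition p0 (y0 : R) : 'cV[R]_3 := vec3 (x0 y0) y0 0.
Definition p1 (y0 : R) : 'cV[R]_3 := vec3 (- y0) (- x0 y0) 0.

Definition Mmono (y0 t : R) : 'M[R]_3 :=
  S_YX (p0 y0) *m mexp (t *: DY) *m S_XY (p1 y0) *m mexp (t *: DX).

Definition mG : R := 2 * H / (H + Num.sqrt DG + 1).
Definition Psi2 : R := - ((H + 1) * (H - Num.sqrt DG - 3)) / 2.
Definition Psim1 : R :=
  (H ^+ 2 - 1) * ((H + 1) * Num.sqrt DG - (H - 1) ^+ 2 + 2) / H ^+ 2.
Definition Psim4 : R := ((H + 1) * Num.sqrt DG - (H - 1) ^+ 2 + 2) / 2.

Definition tauG : R :=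
  mG ^+ 2 * (Psi2 * expR (2 * pi * C) + Psim1 * expR (- (pi * C))
             + Psim4 * expR (- (4 * pi * C))).

End Defs.

(* For A = -2C the linear parts DX and DY have eigenvalues -2C and C +- i, so
   exp(t DX) and exp(t DY) have explicit closed forms; they are identified with
   the power-series exponential through uniqueness of solutions of F' = M F,
   F(0) = 1.  Along the branch x0(y)/y tends to 1/m, so in the variables
   r = y/x0(y) and v = 1/x0(y) the two saltation matrices converge as r -> m,
   v -> 0.  By continuity the trace converges to its value at (r, v, t) =
   (m, 0, pi), which is (m^2 + H^2) e^(2 pi C) + 2 (H^2 - 1) e^(-pi C)
   + H^2 e^(-4 pi C).  This is tau: Psi_2 = Psi_-4 + 1,
   Psi_-1 = 2 (H^2 - 1) Psi_-4 / H^2, and m^2 Psi_-4 = H^2 because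
   sqrt(D)^2 = D. *)

From HB Require Import structures.
From mathcomp Require Import all_boot all_order all_algebra.
From mathcomp Require Import all_classical all_reals all_analysis.
From mathcomp Require Import ring.
Import Order.TTheory GRing.Theory Num.Theory.
Import numFieldNormedType.Exports.
Local Open Scope ring_scope.
Local Open Scope classical_set_scope.
Set Implicit Arguments. Unset Strict Implicit. Unset Printing Implicit Defensive.

Lemma cvg_entries_mx (R : numFieldType) (m n : nat) (T : Type) (F : set_system T)
    (FF : Filter F) (f : T -> 'M[R]_(m, n)) (L : 'M[R]_(m, n)) :
  (forall i j, (fun x => f x i j) @ F --> L i j) -> f @ F --> L.
Proof.
move=> fL A [P PL PA].
have : \near F, forall ij : 'I_m * 'I_n, P ij.1 ij.2 (f F ij.1 ij.2).
  by apply: filter_forall => -[i j]; exact: (fL i j _ (PL i j)).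
by apply: filterS => x Px; apply: PA => i j; exact: (Px (i, j)).
Qed.

Lemma cvg_sum_ord (R : numFieldType) (n : nat) (T : Type) (F : set_system T)
    (FF : Filter F) (f : 'I_n -> T -> R) (l : 'I_n -> R) :
  (forall i, f i @ F --> l i) -> (fun x => \sum_i f i x) @ F --> \sum_i l i.
Proof. by move=> fl; apply: (cvg_big add_continuous) => // i _; exact: fl. Qed.

Lemma cvg_mulmx_entries (R : numFieldType) (m n p : nat) (T : Type)
    (F : set_system T) (FF : Filter F)
    (f : T -> 'M[R]_(m, n)) (g : T -> 'M[R]_(n, p)) (a : 'M[R]_(m, n)) (b : 'M[R]_(n, p)) :
  (forall i j, (fun x => f x i j) @ F --> a i j) ->
  (forall i j, (fun x => g x i j) @ F --> b i j) ->
  forall i j, (fun x => (f x *m g x) i j) @ F --> (a *m b) i j.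
Proof.
move=> fa gb i j; rewrite mxE; under eq_fun do rewrite mxE.
by apply: cvg_sum_ord => l; apply: cvgM.
Qed.

Lemma is_derive_mulmx (R : numFieldType) (m n p : nat)
    (P : R -> 'M[R]_(m, n)) (Q : R -> 'M[R]_(n, p))
    (dP : 'M[R]_(m, n)) (dQ : 'M[R]_(n, p)) (t : R) :
  (forall i j, is_derive t 1 (fun s => P s i j) (dP i j)) ->
  (forall i j, is_derive t 1 (fun s => Q s i j) (dQ i j)) ->
  forall i j, is_derive t 1 (fun s => (P s *m Q s) i j) ((dP *m Q t + P t *m dQ) i j).
Proof.
move=> dPt dQt i j.
have -> : (fun s => (P s *m Q s) i j) = \sum_l (fun s => P s i l * Q s l j).
  by apply/funext => s; rewrite mxE fct_sumE.
have -> : (dP *m Q t + P t *m dQ) i j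
    = \sum_l (P t i l *: dQ l j + Q t l j *: dP i l).
  rewrite !mxE -big_split; apply: eq_bigr => l _ /=.
  by rewrite addrC; congr (_ + _); exact: mulrC.
apply: (is_derive_sum (h := fun l s => P s i l * Q s l j)) => l.
exact: is_deriveM.
Qed.

Section MatrixExponential.
Variables (R : realType) (n : nat) (M : 'M[R]_n.+1).

Let normM : R := \sum_i \sum_j `|M i j|.

Let normM_ge0 : 0 <= normM.
Proof. by apply: sumr_ge0 => i _; apply: sumr_ge0. Qed.

Lemma exprM_entry_le k i j : `|(M ^+ k) i j| <= normM ^+ k.
Proof.
elim: k i j => [|k IHk] i j.
  by rewrite !expr0 mxE; case: (i == j); rewrite ?normr1 ?normr0.
rewrite exprS -mulmxE mxE (le_trans (ler_norm_sum _ _ _)) //.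
apply: (@le_trans _ _ (\sum_l `|M i l| * normM ^+ k)).
  by apply: ler_sum => l _; rewrite normrM ler_wpM2l.
rewrite -mulr_suml exprS ler_wpM2r ?exprn_ge0 //.
rewrite /normM [leRHS](bigD1 i) //= lerDl; apply: sumr_ge0 => l _; exact: sumr_ge0.
Qed.

Definition mexp_coef N i j : R^nat := fun k => (M ^+ (k + N)) i j / k`!%:R.

Lemma is_cvg_pseries_mexp_coef N i j x : cvgn (pseries (mexp_coef N i j) x).
Proof.
apply: normed_cvg.
have cvg_major : cvgn (series (fun k => normM ^+ N * exp_coeff (normM * `|x|) k)).
  exact: is_cvg_seriesZ (is_cvg_series_exp_coeff _).
apply: series_le_cvg cvg_major => k /=.
- by rewrite normr_ge0.
- by rewrite /exp_coeff /= mulr_ge0 ?divr_ge0 ?exprn_ge0 ?mulr_ge0 ?normM_ge0.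
rewrite /exp_coeff /mexp_coef /= !normrM normfV normr_nat normrX.
rewrite exprMn !mulrA -exprD addnC [leRHS]mulrAC.
by rewrite ler_wpM2r ?exprn_ge0 // ler_wpM2r ?invr_ge0 // exprM_entry_le.
Qed.

Lemma pseries_diffs_mexp_coef N i j :
  pseries_diffs (mexp_coef N i j) = mexp_coef N.+1 i j.
Proof.
apply/funext => k; rewrite /pseries_diffs /mexp_coef factS natrM invfM addSnnS.
by rewrite mulrCA mulVKf ?pnatr_eq0.
Qed.

(* The (i, j) entry of M ^+ N *m mexp (t *: M). *)
Definition mexp_entry N i j (t : R) : R := limn (pseries (mexp_coef N i j) t).

Lemma is_derive_mexp_entry N i j (t : R) :
  is_derive t (1 : R) (mexp_entry N i j) (mexp_entry N.+1 i j t).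
Proof.
rewrite /mexp_entry -pseries_diffs_mexp_coef.
apply: (@pseries_snd_diffs _ _ (`|t| + 1)); rewrite ?pseries_diffs_mexp_coef.
- exact: is_cvg_pseries_mexp_coef.
- exact: is_cvg_pseries_mexp_coef.
- exact: is_cvg_pseries_mexp_coef.
- by rewrite [ltRHS]ger0_norm ?addr_ge0 // ltrDl.
Qed.

Lemma mexp_entryS N i j t :
  mexp_entry N.+1 i j t = \sum_l M i l * mexp_entry N l j t.
Proof.
apply: cvg_lim => //.
have -> : pseries (mexp_coef N.+1 i j) t
    = (fun k => \sum_l M i l * pseries (mexp_coef N l j) t k).
  apply/funext => k; rewrite /pseries /series /=.
  under [RHS]eq_bigr do rewrite mulr_sumr.
  rewrite [RHS]exchange_big /=; apply: eq_bigr => m _.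
  rewrite /mexp_coef addnS exprS -mulmxE mxE !mulr_suml; apply: eq_bigr => l _.
  by rewrite !mulrA.
by apply: cvg_sum_ord => l; apply: cvgM; [exact: cvg_cst | exact: is_cvg_pseries_mexp_coef].
Qed.

Lemma mexp_entrySr N i j t :
  mexp_entry N.+1 i j t = \sum_l mexp_entry N i l t * M l j.
Proof.
apply: cvg_lim => //.
have -> : pseries (mexp_coef N.+1 i j) t
    = (fun k => \sum_l pseries (mexp_coef N i l) t k * M l j).
  apply/funext => k; rewrite /pseries /series /=.
  under [RHS]eq_bigr do rewrite mulr_suml.
  rewrite [RHS]exchange_big /=; apply: eq_bigr => m _.
  rewrite /mexp_coef addnS exprSr -mulmxE mxE !mulr_suml; apply: eq_bigr => l _.
  ring.
by apply: cvg_sum_ord => l; apply: cvgM; [exact: is_cvg_pseries_mexp_coef | exact: cvg_cst].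
Qed.

Lemma mexpZE t : mexp (t *: M) = \matrix_(i, j) mexp_entry 0 i j t.
Proof.
apply: cvg_lim => //; apply: cvg_entries_mx => i j; rewrite mxE.
have -> : (fun k => series (fun m => m`!%:R^-1 *: (t *: M) ^+ m) k i j)
    = pseries (mexp_coef 0 i j) t.
  apply/funext => k; rewrite /pseries /series /= summxE; apply: eq_bigr => m _.
  by rewrite exprZn !mxE /mexp_coef addn0; ring.
exact: is_cvg_pseries_mexp_coef.
Qed.

Lemma mexpZ0 : mexp (0 *: M) = 1.
Proof.
rewrite mexpZE; apply/matrixP => i j; rewrite !mxE /mexp_entry.
apply: lim_near_cst => //; near=> k.
have -> : k = k.-1.+1 by rewrite prednK //; near: k; exists 1%N.
rewrite /pseries /series /= big_nat_recl //= big1 => [|m _]; last by rewrite expr0n mulr0.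
by rewrite /mexp_coef fact0 divr1 !expr0 mulr1 addr0 mxE.
Unshelve. all: by end_near.
Qed.

Lemma is_derive_mexpZ (t : R) i j :
  is_derive t (1 : R) (fun s => mexp (s *: M) i j) ((M *m mexp (t *: M)) i j).
Proof.
under eq_fun do rewrite mexpZE mxE.
rewrite mexpZE mxE; under eq_bigr do rewrite mxE.
by rewrite -mexp_entryS; exact: is_derive_mexp_entry.
Qed.

Lemma mulmx_mexpZC t : M *m mexp (t *: M) = mexp (t *: M) *m M.
Proof.
apply/matrixP => i j; rewrite mexpZE !mxE.
under eq_bigr do rewrite mxE; rewrite -mexp_entryS mexp_entrySr.
by apply: eq_bigr => l _; rewrite mxE.
Qed.

Lemma mexpNZ_mul_sol (G : R -> 'M[R]_n.+1) :
  G 0 = 1 ->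
  (forall t i j, is_derive t (1 : R) (fun s => G s i j) ((M *m G t) i j)) ->
  forall t, mexp (- t *: M) *m G t = 1.
Proof.
move=> G0 dG t; apply/matrixP => i j.
suff -> : (mexp (- t *: M) *m G t) i j = (mexp (- 0 *: M) *m G 0) i j.
  by rewrite oppr0 mexpZ0 G0 mul1mx.
apply: (is_derive_0_is_cst (f := fun s => (mexp (- s *: M) *m G s) i j)) => s.
have dE k l : is_derive s (1 : R) (fun u => mexp (- u *: M) k l)
    ((- (M *m mexp (- s *: M))) k l).
  rewrite mxE -mulrN1.
  exact: is_derive1_comp (is_derive_mexpZ (- s) k l) (is_deriveN (is_derive_id s 1)).
have := is_derive_mulmx (P := fun u => mexp (- u *: M)) dE (dG s) i j.
by rewrite mulNmx mulmx_mexpZC -mulmxA addNr mxE.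
Qed.

Lemma mexpZ_uniq (F : R -> 'M[R]_n.+1) :
  F 0 = 1 ->
  (forall t i j, is_derive t (1 : R) (fun s => F s i j) ((M *m F t) i j)) ->
  forall t, mexp (t *: M) = F t.
Proof.
move=> F0 dF t.
have /mulmx1C mexpNZK :=
  mexpNZ_mul_sol (G := fun t => mexp (t *: M)) mexpZ0 is_derive_mexpZ t.
by rewrite -[RHS]mul1mx -mexpNZK -mulmxA mexpNZ_mul_sol // mulmx1.
Qed.

Lemma continuous_mexpZ i j : continuous (fun t : R => mexp (t *: M) i j).
Proof.
move=> t; have dE := is_derive_mexpZ t i j.
by apply: differentiable_continuous; apply/derivable1_diffP; exact: ex_derive.
Qed.

End MatrixExponential.

Section ResonantExponentials.
Variables (R : realType) (C H : R).

(* DY is DX conjugated by the transposition of the first two coordinates, so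
   expDY t is expDX t with its first two rows and columns swapped. *)
Definition expDX (t : R) : 'M[R]_3 :=
  let E := expR (C * t) in let G := expR (- (2 * C) * t) in
  \matrix_(i < 3, j < 3) nth 0 (nth [::]
    [:: [:: G; H * E * cos t - 3 * C * H * E * sin t - H * G;
            - (2 * C * H * E * cos t) - H * (3 * C ^+ 2 + 1) * E * sin t
              + 2 * C * H * G];
        [:: 0; E * (cos t - C * sin t); - ((C ^+ 2 + 1) * E * sin t)];
        [:: 0; E * sin t; E * (cos t + C * sin t)]] i) j.

Definition expDY (t : R) : 'M[R]_3 :=
  let E := expR (C * t) in let G := expR (- (2 * C) * t) in
  \matrix_(i < 3, j < 3) nth 0 (nth [::]
    [:: [:: E * (cos t - C * sin t); 0; - ((C ^+ 2 + 1) * E * sin t)];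
        [:: H * E * cos t - 3 * C * H * E * sin t - H * G; G;
            - (2 * C * H * E * cos t) - H * (3 * C ^+ 2 + 1) * E * sin t
              + 2 * C * H * G];
        [:: E * sin t; 0; E * (cos t + C * sin t)]] i) j.

Lemma mexp_DX t : mexp (t *: DX (- (2 * C)) C H) = expDX t.
Proof.
apply: mexpZ_uniq => [|s i j].
  apply/matrixP => i j; rewrite !mxE.
  by case: i => [[|[|[|i]]] Hi] //; case: j => [[|[|[|j]]] Hj] //=;
    rewrite ?mulr0 ?expR0 ?cos0 ?sin0; ring.
rewrite [X in is_derive _ _ _ X]mxE !big_ord_recr big_ord0 /= !mxE /=.
under eq_fun do rewrite mxE.
by case: i => [[|[|[|i]]] Hi] //; case: j => [[|[|[|j]]] Hj] //=;
  apply: trigger_derive; rewrite /GRing.scale /=; ring.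
Qed.

Lemma mexp_DY t : mexp (t *: DY (- (2 * C)) C H) = expDY t.
Proof.
apply: mexpZ_uniq => [|s i j].
  apply/matrixP => i j; rewrite !mxE.
  by case: i => [[|[|[|i]]] Hi] //; case: j => [[|[|[|j]]] Hj] //=;
    rewrite ?mulr0 ?expR0 ?cos0 ?sin0; ring.
rewrite [X in is_derive _ _ _ X]mxE !big_ord_recr big_ord0 /= !mxE /=.
under eq_fun do rewrite mxE.
by case: i => [[|[|[|i]]] Hi] //; case: j => [[|[|[|j]]] Hj] //=;
  apply: trigger_derive; rewrite /GRing.scale /=; ring.
Qed.

End ResonantExponentials.

Lemma cvg_inv_pinfty (R : realFieldType) : (fun y : R => y^-1) @ +oo --> (0 : R).
Proof.
apply/gtr0_cvgV0; last exact: cvg_id.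
by apply: nbhs_pinfty_gt; rewrite num_real.
Qed.

Section BranchAsymptotics.
Variables (R : realType) (C H Lam : R).
Hypothesis H_gt0 : 0 < H.

Lemma mG_gt0 : 0 < mG H.
Proof. by rewrite /mG divr_gt0 ?mulr_gt0 // -addrA addr_gt0 // ltr_wpDl ?sqrtr_ge0. Qed.

Lemma x0_div_cvg : (fun y => x0 C H Lam y / y) @ +oo --> (mG H)^-1.
Proof.
have kk_neq0 : kk C != 0 by rewrite /kk gt_eqF // ltr_pwDr // sqr_ge0.
pose a0 := DG H / (4 * H ^+ 2).
pose a1 := C * Lam * (1 - H) / (H * kk C).
pose a2 := Lam ^+ 2 * (kk C - H) / (H * kk C ^+ 2).
pose f y := (H + 1) / (2 * H) + C * Lam / kk C * y + Num.sqrt (a0 + a1 * y + a2 * y ^+ 2).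
have x0_divE : \forall y \near +oo, f y^-1 = x0 C H Lam y / y.
  near=> y.
  have y_gt0 : 0 < y by near: y; apply: nbhs_pinfty_gt; rewrite num_real.
  have [y_neq0 H_neq0] : y != 0 /\ H != 0 by rewrite !gt_eqF.
  rewrite /x0; set Q := (DG H * _ / _ + _ + _).
  have -> : Num.sqrt Q = y * Num.sqrt (a0 + a1 * y^-1 + a2 * y^-1 ^+ 2).
    rewrite -{1}(gtr0_norm y_gt0) -sqrtr_sqr -sqrtrM ?sqr_ge0 //.
    by congr Num.sqrt; rewrite /Q /a0 /a1 /a2; field; rewrite kk_neq0 y_neq0 H_neq0.
  by rewrite /f; field; rewrite kk_neq0 y_neq0 H_neq0.
have f0 : f 0 = (mG H)^-1.
  rewrite /f /mG invf_div mulr0 addr0 expr0n /= !mulr0 !addr0.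
  have -> : a0 = (2 * H)^-1 ^+ 2 * DG H by rewrite /a0; field; rewrite gt_eqF.
  rewrite sqrtrM ?sqr_ge0 // sqrtr_sqr gtr0_norm ?invr_gt0 ?mulr_gt0 //.
  by field; rewrite gt_eqF.
rewrite -f0; apply: cvg_trans (near_eq_cvg x0_divE) _.
have y_cvg := @cvg_inv_pinfty R.
apply: cvgD; last (apply: continuous_cvg; first exact: sqrt_continuous).
all: by repeat first [exact: y_cvg | exact: cvg_cst | apply: cvgD | apply: cvgM].
Unshelve. all: by end_near.
Qed.

Lemma x0_gt0_near : \forall y \near +oo, 0 < x0 C H Lam y.
Proof.
near=> y.
have y_gt0 : 0 < y by near: y; apply: nbhs_pinfty_gt; rewrite num_real.
suff : 0 < x0 C H Lam y / y by rewrite pmulr_lgt0 ?invr_gt0.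
by near: y; apply: (cvgr_gt _ x0_div_cvg); rewrite invr_gt0 mG_gt0.
Unshelve. all: by end_near.
Qed.

Lemma div_x0_cvg : (fun y => y / x0 C H Lam y) @ +oo --> mG H.
Proof.
have -> : (fun y => y / x0 C H Lam y) = (fun y => (x0 C H Lam y / y)^-1).
  by apply/funext => y; rewrite invf_div.
by rewrite -[mG H]invrK; apply: cvgV x0_div_cvg; rewrite invr_eq0 gt_eqF ?mG_gt0.
Qed.

Lemma inv_x0_cvg : (fun y => (x0 C H Lam y)^-1) @ +oo --> 0.
Proof.
have x0_invE : \forall y \near +oo, y / x0 C H Lam y * y^-1 = (x0 C H Lam y)^-1.
  near=> y.
  have y_gt0 : 0 < y by near: y; apply: nbhs_pinfty_gt; rewrite num_real.
  by rewrite mulrAC mulfV ?mul1r ?gt_eqF.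
apply: cvg_trans (near_eq_cvg x0_invE) _.
by rewrite -(mulr0 (mG H)); apply: cvgM; [exact: div_x0_cvg | exact: cvg_inv_pinfty].
Unshelve. all: by end_near.
Qed.

End BranchAsymptotics.

Section Saltation.
Variables (R : realType) (A C H Lam : R).

Definition saltYX (r v : R) : 'M[R]_3 :=
  \matrix_(i < 3, j < 3) nth 0 (nth [::]
    [:: [:: 1; 0; A + (1 + H) * Lam * v];
        [:: 0; 1; - (A * r) + (1 + H) * Lam * v];
        [:: 0; 0; r]] i) j.

Definition saltXY (r v : R) : 'M[R]_3 :=
  \matrix_(i < 3, j < 3) nth 0 (nth [::]
    [:: [:: 1; 0; - (A * r) + (1 + H) * Lam * v];
        [:: 0; 1; A + (1 + H) * Lam * v];
        [:: 0; 0; r]] i) j.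

Lemma S_YX_p0 y : x0 C H Lam y != 0 ->
  S_YX A C H Lam (p0 C H Lam y) = saltYX (y / x0 C H Lam y) (x0 C H Lam y)^-1.
Proof.
move=> x0_neq0; apply/matrixP => i j.
rewrite /S_YX /Xf /Yf /p0 /vec3 /e3 !mxE big_ord1 !mxE /=.
by case: i => [[|[|[|i]]] Hi] //; case: j => [[|[|[|j]]] Hj] //=; field.
Qed.

Lemma S_XY_p1 y : x0 C H Lam y != 0 ->
  S_XY A C H Lam (p1 C H Lam y) = saltXY (y / x0 C H Lam y) (x0 C H Lam y)^-1.
Proof.
move=> x0_neq0; apply/matrixP => i j.
rewrite /S_XY /Xf /Yf /p1 /vec3 /e3 !mxE big_ord1 !mxE /=.
by case: i => [[|[|[|i]]] Hi] //; case: j => [[|[|[|j]]] Hj] //=; field.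
Qed.

Section Limits.
Context {T : Type} {F : set_system T} {FF : Filter F}.
Variables (r v : T -> R) (r0 v0 : R).
Hypotheses (r_cvg : r @ F --> r0) (v_cvg : v @ F --> v0).

Lemma saltYX_cvg i j : (fun x => saltYX (r x) (v x) i j) @ F --> saltYX r0 v0 i j.
Proof.
rewrite mxE; under eq_fun do rewrite mxE.
by case: i => [[|[|[|i]]] Hi] //; case: j => [[|[|[|j]]] Hj] //=;
  repeat first [exact: r_cvg | exact: v_cvg | exact: cvg_cst
               | apply: cvgD | apply: cvgN | apply: cvgM].
Qed.

Lemma saltXY_cvg i j : (fun x => saltXY (r x) (v x) i j) @ F --> saltXY r0 v0 i j.
Proof.
rewrite mxE; under eq_fun do rewrite mxE.
by case: i => [[|[|[|i]]] Hi] //; case: j => [[|[|[|j]]] Hj] //=;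
  repeat first [exact: r_cvg | exact: v_cvg | exact: cvg_cst
               | apply: cvgD | apply: cvgN | apply: cvgM].
Qed.

End Limits.
End Saltation.

Section TraceAtPi.
Variables (R : realType) (C H : R).
Let E := expR (C * pi).

Let E_neq0 : E != 0. Proof. by rewrite gt_eqF ?expR_gt0. Qed.

Lemma trace_at_pi Lam m :
  \tr (saltYX (- (2 * C)) H Lam m 0 *m expDY C H pi *m
       saltXY (- (2 * C)) H Lam m 0 *m expDX C H pi)
  = (m ^+ 2 + H ^+ 2) * E ^+ 2 + 2 * (H ^+ 2 - 1) / E + H ^+ 2 / E ^+ 4.
Proof.
have G_E : expR (- (2 * C) * pi) = (E ^+ 2)^-1.
  by rewrite -expRM_natl -expRN; congr expR; ring.
rewrite /mxtrace; do 6 rewrite ?big_ord_recr ?big_ord0 /= ?mxE /=.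
by rewrite cospi sinpi G_E -/E; field.
Qed.

Hypotheses (H_gt0 : 0 < H) (H_lt1 : H < 1).

Lemma mG_sqr_Psim4 : mG H ^+ 2 * Psim4 H = H ^+ 2.
Proof.
have H_neq0 : H != 0 by rewrite gt_eqF.
have s_ge0 := sqrtr_ge0 (DG H).
have s_sqr : Num.sqrt (DG H) ^+ 2 = DG H.
  by rewrite sqr_sqrtr // /DG mulr_ge0 ?subr_ge0 ?addr_ge0 ?mulr_ge0 ?ltW.
rewrite /mG /Psim4; set s := Num.sqrt (DG H) in s_ge0 s_sqr *.
have -> : (H + 1) * s - (H - 1) ^+ 2 + 2 = ((H + s + 1) ^+ 2 - (s ^+ 2 - DG H)) / 2.
  by rewrite /DG; field.
rewrite s_sqr subrr subr0; field.
by rewrite gt_eqF // addr_gt0 // ltr_wpDr.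
Qed.

Lemma tauGE :
  tauG C H = (mG H ^+ 2 + H ^+ 2) * E ^+ 2 + 2 * (H ^+ 2 - 1) / E + H ^+ 2 / E ^+ 4.
Proof.
have H_neq0 : H != 0 by rewrite gt_eqF.
have Psi2E : Psi2 H = Psim4 H + 1 by rewrite /Psi2 /Psim4; field.
have Psim1E : Psim1 H = 2 * (H ^+ 2 - 1) / H ^+ 2 * Psim4 H.
  by rewrite /Psim1 /Psim4; field.
have e2 : expR (2 * pi * C) = E ^+ 2 by rewrite -expRM_natl; congr expR; ring.
have e1 : expR (- (pi * C)) = E^-1 by rewrite expRN mulrC.
have e4 : expR (- (4 * pi * C)) = (E ^+ 4)^-1.
  by rewrite expRN -expRM_natl; congr (expR _)^-1; ring.
rewrite /tauG Psi2E Psim1E e2 e1 e4.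
transitivity (mG H ^+ 2 * E ^+ 2 + mG H ^+ 2 * Psim4 H *
                (E ^+ 2 + 2 * (H ^+ 2 - 1) / H ^+ 2 / E + (E ^+ 4)^-1)).
  by ring.
by rewrite mG_sqr_Psim4; field; rewrite E_neq0 H_neq0.
Qed.

End TraceAtPi.

Theorem mainTheorem12 (R : realType) (A C H Lam : R) :
  A != 0 -> A = - (2 * C) -> 0 < H -> H < 1 ->
  (fun yt : R * R => \tr (Mmono A C H Lam yt.1 yt.2))
    @ filter_prod (pinfty_nbhs R) (dnbhs (pi : R))
    --> tauG C H.
Proof.
move=> _ A_eq H_gt0 H_lt1; set FP := filter_prod _ _.
pose S1 y := saltYX A H Lam (y / x0 C H Lam y) (x0 C H Lam y)^-1.
pose S2 y := saltXY A H Lam (y / x0 C H Lam y) (x0 C H Lam y)^-1.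
have MmonoE : \forall yt \near FP,
    \tr (S1 yt.1 *m mexp (yt.2 *: DY A C H) *m S2 yt.1 *m mexp (yt.2 *: DX A C H))
    = \tr (Mmono A C H Lam yt.1 yt.2).
  exists ([set y | 0 < x0 C H Lam y], setT) => [|[y t] [/= /lt0r_neq0 x0_neq0 _]].
    by split; [exact: x0_gt0_near | exact: filterT].
  by rewrite /Mmono S_YX_p0 // S_XY_p1.
have -> : tauG C H = \tr (saltYX A H Lam (mG H) 0 *m mexp (pi *: DY A C H) *m
                          saltXY A H Lam (mG H) 0 *m mexp (pi *: DX A C H)).
  by rewrite A_eq mexp_DX mexp_DY trace_at_pi tauGE.
apply: cvg_trans (near_eq_cvg MmonoE) _.
have S1_cvg i j : (fun yt => S1 yt.1 i j) @ FP --> saltYX A H Lam (mG H) 0 i j.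
  apply: (cvg_comp fst (fun y => S1 y i j) cvg_fst).
  by apply: saltYX_cvg; [exact: div_x0_cvg | exact: inv_x0_cvg].
have S2_cvg i j : (fun yt => S2 yt.1 i j) @ FP --> saltXY A H Lam (mG H) 0 i j.
  apply: (cvg_comp fst (fun y => S2 y i j) cvg_fst).
  by apply: saltXY_cvg; [exact: div_x0_cvg | exact: inv_x0_cvg].
have E_cvg (M : 'M[R]_3) i j :
    (fun yt => mexp (yt.2 *: M) i j) @ FP --> mexp (pi *: M) i j.
  apply: (cvg_comp snd (fun t => mexp (t *: M) i j) cvg_snd).
  exact: cvg_within_filter (@continuous_mexpZ _ _ M i j pi).
apply: cvg_sum_ord => i.
apply: cvg_mulmx_entries; last exact: E_cvg.
apply: cvg_mulmx_entries; last exact: S2_cvg.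
by apply: cvg_mulmx_entries; [exact: S1_cvg | exact: E_cvg].
Qed.
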